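(* Let $n\ge 1$. It is possible to place $n$ queens on an $n\times n$ symmetric Toeplitz chessboard so that no two queens attack each other if and only if $n \equiv 0$ or $1 \pmod 4$.
   Context: An $n\times n$ symmetric Toeplitz chessboard is one whose square $(i,j)$ ($1\le i,j\le n$) is labeled by a number depending only on $|i-j|$, with distinct values of $|i-j|$ receiving distinct labels (equivalently, square $(i,j)$ is labeled $|i-j|$). Two queens attack each other if they lie in the same row, in the same column, or on squares with the same label. *)

From mathcomp Require Import all_boot.
Set Implicit Arguments. Unset Strict Implicit. Unset Printing Implicit Defensive.

(* Squares of the n x n board: pairs (i, j) of row and column indices in 'I_n
   (0-based; shifting to 1-based does not change |i - j|). *)
Definition square (n : nat) := ('I_n * 'I_n)%type.

(* Label of square (i,j) on the symmetric Toeplitz board: |i - j|. *)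
Definition label n (s : square n) : nat := ((s.1 - s.2) + (s.2 - s.1))%N.
(* (truncated subtraction: this is |i - j|) *)

Definition attacks n (s t : square n) : bool :=
  [|| s.1 == t.1, s.2 == t.2 | label s == label t].

Definition nonattacking_placement n (Q : {set square n}) : Prop :=
  #|Q| = n /\ forall s t, s \in Q -> t \in Q -> s != t -> ~~ attacks s t.

From mathcomp Require Import all_boot zify.

Set Implicit Arguments.
Unset Strict Implicit.
Unset Printing Implicit Defensive.

(* The rows, the columns and the labels of a non-attacking placement each run
   through 0, ..., n-1 exactly once, so each sums to 'C(n, 2).  Since
   label (i, j) = i + j - 2 min(i, j), subtracting gives 'C(n, 2) = 2 M for
   some M, and 'C(n, 2) = n(n-1)/2 is even exactly when n = 0 or 1 (mod 4).
   Conversely, for n = 4t and n = 4t+1 an explicit permutation f of 0..n-1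
   with pairwise distinct displacements |i - f i| gives a placement. *)

Lemma sum_injective_below (T : finType) (A : {set T}) n (h : T -> nat) :
  #|A| = n -> {in A, forall x, h x < n} -> {in A &, injective h} ->
  \sum_(x in A) h x = 'C(n, 2).
Proof.
move=> cardA h_lt h_inj.
have uniq_hA : uniq (map h (enum A)).
  by rewrite map_inj_in_uniq ?enum_uniq // => x y; rewrite !mem_enum; apply: h_inj.
have sub_iota : {subset map h (enum A) <= iota 0 n}.
  by move=> _ /mapP[x xA ->]; rewrite mem_iota h_lt // -mem_enum.
have size_iota_le : size (iota 0 n) <= size (map h (enum A)).
  by rewrite size_map size_iota -cardE cardA.
have hA_iota := (uniq_min_size uniq_hA sub_iota size_iota_le).2.
rewrite -big_enum -(big_map h predT id) (perm_big _ (uniq_perm _ _ hA_iota)) //.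
  by rewrite -bin2_sum /index_iota subn0.
exact: iota_uniq.
Qed.

Lemma double_bin2 n : 'C(n, 2).*2 = n * n.-1.
Proof. by elim: n => // n IH; rewrite binS bin1 doubleD IH; case: n {IH} => //=; nia. Qed.

Lemma even_bin2_mod4 n : ~~ odd 'C(n, 2) -> n %% 4 = 0 \/ n %% 4 = 1.
Proof.
move=> /negbTE even_bin2; have := double_bin2 n.
rewrite -[in LHS](odd_double_half 'C(n, 2)) even_bin2 add0n.
move: ('C(n, 2))./2 => k; rewrite (divn_eq n 4).
have := ltn_pmod n (isT : 0 < 4); move: (n %/ 4) (n %% 4) => q [|[|[|[|r]]]] //; nia.
Qed.

Section NonattackingPlacement.

Variables (n : nat) (Q : {set square n}).
Hypothesis Q_ok : nonattacking_placement Q.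

Lemma placement_sum (h : square n -> nat) :
  (forall s, h s < n) -> (forall s t, h s = h t -> attacks s t) ->
  \sum_(s in Q) h s = 'C(n, 2).
Proof.
case: Q_ok => cardQ Q_free h_lt h_attacks.
apply: sum_injective_below => // s t sQ tQ hst; apply/eqP; apply: contraT => neq_st.
by have := Q_free s t sQ tQ neq_st; rewrite h_attacks.
Qed.

Lemma placement_bin2_even : ~~ odd 'C(n, 2).
Proof.
have sum_rows : \sum_(s in Q) val s.1 = 'C(n, 2).
  apply: placement_sum => [s|s t /val_inj eq_row]; first exact: ltn_ord.
  by rewrite /attacks eq_row eqxx.
have sum_cols : \sum_(s in Q) val s.2 = 'C(n, 2).
  apply: placement_sum => [s|s t /val_inj eq_col]; first exact: ltn_ord.
  by rewrite /attacks eq_col eqxx orbT.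
have sum_labels : \sum_(s in Q) label s = 'C(n, 2).
  apply: placement_sum => [[i j]|s t eq_label]; last by rewrite /attacks eq_label eqxx !orbT.
  by rewrite /label /=; have := ltn_ord i; have := ltn_ord j; lia.
have : \sum_(s in Q) (label s + 2 * minn s.1 s.2) = \sum_(s in Q) (val s.1 + val s.2).
  by apply: eq_bigr => -[i j] _; rewrite /label /=; lia.
rewrite big_split [RHS]big_split /= sum_labels sum_rows sum_cols -big_distrr /=.
by move: (\sum_(s in Q) _) => m bin2_eq; rewrite (_ : 'C(n, 2) = m.*2) ?odd_double //; lia.
Qed.

End NonattackingPlacement.

Definition displacement (f : nat -> nat) i := (i - f i) + (f i - i).

Definition queen_perm n (f : nat -> nat) : Prop :=
  [/\ forall i, i < n -> f i < n,
      forall i j, i < n -> j < n -> f i = f j -> i = j &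
      forall i j, i < n -> j < n -> displacement f i = displacement f j -> i = j].

Lemma queen_perm_placement n f :
  queen_perm n f -> exists Q : {set square n}, nonattacking_placement Q.
Proof.
case=> f_lt f_inj displacement_inj.
pose queen (i : 'I_n) : square n := (i, Ordinal (f_lt _ (ltn_ord i))).
exists (queen @: setT); split; first by rewrite card_imset ?cardsT ?card_ord // => i j [].
move=> _ _ /imsetP[i _ ->] /imsetP[j _ ->] neq_queens.
have neq_ij : i != j by apply: contraNneq neq_queens => ->.
rewrite /attacks /= (negbTE neq_ij) /=; apply/norP; split; apply: contra neq_ij.
  by move=> /eqP /(congr1 val) /(f_inj _ _ (ltn_ord i) (ltn_ord j)) /val_inj ->.
by move=> /eqP /(displacement_inj _ _ (ltn_ord i) (ltn_ord j)) /val_inj ->.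
Qed.

Definition queen_perm4 t i :=
  if i == 0 then 2*t - 1
  else if i <= t then 4*t - i
  else if i <= 2*t - 1 then 4*t - 1 - i
  else if i <= 3*t - 2 then 4*t - 2 - i
  else if i == 3*t - 1 then 3*t - 1
  else 4*t - 1 - i.

Definition queen_perm4S t i :=
  if i == 0 then 2*t - 1
  else if i <= t then 4*t + 1 - i
  else if i <= 2*t then 4*t - i
  else if i <= 3*t - 2 then 4*t - 1 - i
  else if i == 3*t - 1 then 3*t
  else 4*t - i.

Lemma queen_perm4P t : 0 < t -> queen_perm (4*t) (queen_perm4 t).
Proof.
by move=> t_gt0; split=> [i|i j|i j]; rewrite /displacement /queen_perm4;
  repeat case: ifP; move=> *; lia.
Qed.

Lemma queen_perm4SP t : 1 < t -> queen_perm (4*t + 1) (queen_perm4S t).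
Proof.
by move=> t_gt1; split=> [i|i j|i j]; rewrite /displacement /queen_perm4S;
  repeat case: ifP; move=> *; lia.
Qed.

Lemma queen_perm1 : queen_perm 1 id.
Proof. by split=> [|[|i] [|j]|[|i] [|j]]. Qed.

Lemma queen_perm5 : queen_perm 5 (nth 0 [:: 2; 4; 1; 3; 0]).
Proof.
split=> [i|i j|i j]; first by do 5?[case: i => [|i] //].
  by do 5?[case: i => [|i] //]; do 5?[case: j => [|j] //].
by do 5?[case: i => [|i] //]; do 5?[case: j => [|j] //].
Qed.

Lemma queen_perm_mod4 n : 1 <= n -> n %% 4 = 0 \/ n %% 4 = 1 ->
  exists f, queen_perm n f.
Proof.
move=> n_gt0 n_mod4; have := divn_eq n 4; move: (n %/ 4) => t n_eq.
case: n_mod4 => r_eq; rewrite r_eq mulnC in n_eq; rewrite {}n_eq in n_gt0 *.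
  by exists (queen_perm4 t); rewrite addn0; apply: queen_perm4P; lia.
case: t {n_gt0} => [|[|t]]; [exists id | exists (nth 0 [:: 2; 4; 1; 3; 0]) |].
- exact: queen_perm1.
- exact: queen_perm5.
by exists (queen_perm4S t.+2); apply: queen_perm4SP.
Qed.

Theorem corollary2 (n : nat) : 1 <= n ->
  (exists Q : {set square n}, nonattacking_placement Q) <->
  (n %% 4 = 0 \/ n %% 4 = 1).
Proof.
move=> n_gt0; split=> [[Q Q_ok]|n_mod4].
  exact: even_bin2_mod4 (placement_bin2_even Q_ok).
by have [f /queen_perm_placement] := queen_perm_mod4 n_gt0 n_mod4.
Qed.
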